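(* Let $n$ be a positive integer, let $\mathcal{T}_n$ be the transducer defined below and let $\mathcal{T}'_n$ be the trimmed result of the specialized determinization of $\mathcal{T}_n$. Then: (1) $\mathcal{T}'_n$ has at least $(2n+3)2^{n-2}$ states; (2) the accessible subset-construction determinization of the underlying automaton of $\mathcal{T}'_n$ has at least $n!+2$ states; (3) the accessible subset-construction determinization of the reversed underlying automaton of $\mathcal{T}'_n$ has at least $2^n+n$ states.
   Context: Let $\Sigma_n=\{a_1,\dots,a_n\}$ and let the output monoid be the free monoid $\{1\}^*$. $\mathcal{T}_n=\langle\Sigma_n^*\times\{1\}^*,Q,\{s\},\{f\},\Delta_n\rangle$ with $Q=\{s,q_1,\dots,q_n,f\}$ and $\Delta_n=\Delta_{s,n}\cup\Delta_{Q_n}\cup\Delta_{f,n}$ where: $\Delta_{s,n}=\{\langle s,\langle a_j,1^{i-1}\rangle,q_i\rangle:1\le i,j\le n\}$; $\Delta_{Q_n}$ consists, for all $1\le i,j\le n$, of $\langle q_i,\langle a_j,1^n\rangle,q_i\rangle$ if $i\notin\{1,j\}$, $\langle q_1,\langle a_j,1^{n+j-1}\rangle,q_j\rangle$ if $i=1$, and $\langle q_j,\langle a_j,1^{n-j+1}\rangle,q_1\rangle$ if $i=j\neq1$; $\Delta_{f,n}=\{\langle q_i,\langle a_j,1^{2n-i+1}\rangle,f\rangle:1\le j\le i\le n\}$. Specialized determinization (for a transducer with single initial state $i$ over $\Sigma\times\Omega^*$; here $\Omega=\{1\}$ with strict lexicographic order $1^k\prec1^l$ iff $k<l$): states are pairs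 $\langle p,N\rangle\in Q\times2^Q$, generated inductively from $\langle i,\emptyset\rangle$: for a generated $\langle p,N\rangle$ and $\langle p,\langle a,v\rangle,p'\rangle\in\Delta$ let $N'=\{q':\exists q\in N,\exists v'\ \langle q,\langle a,v'\rangle,q'\rangle\in\Delta\}\cup\{q:\exists v'\prec v\ \langle p,\langle a,v'\rangle,q\rangle\in\Delta\}$; if $p'\notin N'$ add state $\langle p',N'\rangle$ and transition $\langle\langle p,N\rangle,\langle a,v\rangle,\langle p',N'\rangle\rangle$. Final states are $\{\langle f,N\rangle:f\in F,\ N\cap F=\emptyset\}$. Trimming keeps only accessible and co-accessible states. The underlying automaton of a transducer is the automaton over $\Sigma$ with transitions $\langle p,a,q\rangle$ for each $\langle p,\langle a,m\rangle,q\rangle\in\Delta$ (same states, initial and final states); its reversal swaps initial and final states and reverses transitions. The accessible subset-construction determinization has as states the subsets reachable from the set of initial states via $\delta(P,a)=\{q:\exists p\in P\ \langle p,a,q\rangle\}$. *)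

From mathcomp Require Import all_boot.
Set Implicit Arguments. Unset Strict Implicit. Unset Printing Implicit Defensive.

(* An output word 1^k is represented by its length k : nat; the strict      *)
(* lexicographic order 1^k < 1^l is then k < l.                              *)
Record transducer (Q A : Type) := Transducer {
  tstate : Q -> Prop;
  tinit  : Q -> Prop;
  tfinal : Q -> Prop;
  ttrans : Q -> A -> nat -> Q -> Prop
}.

Record automaton (Q A : Type) := Automaton {
  astate : Q -> Prop;
  ainit  : Q -> Prop;
  afinal : Q -> Prop;
  atrans : Q -> A -> Q -> Prop
}.

(* States Q = {s, q_1, ..., q_n, f} encoded as 'I_(n+2):
     s = 0, q_i = i (1 <= i <= n), f = n+1.
   Letters Sigma_n = {a_1, ..., a_n} encoded as 'I_n: a_j = j-1. *)
Definition Tstate (n : nat) := 'I_n.+2.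
Definition Tletter (n : nat) := 'I_n.

Definition st_s (n : nat) : Tstate n := ord0.
Definition st_f (n : nat) : Tstate n := ord_max.

(* Delta_n on the nat encodings: p, p' states, j letter index (1..n), m output length *)
Definition Tdelta_nat (n p j m p' : nat) : bool :=
  [|| (* Delta_{s,n}: <s, <a_j, 1^(i-1)>, q_i>, here i = p' *)
      [&& p == 0, 1 <= p' <= n & m == p'.-1],
      (* Delta_{Q_n}, case i notin {1, j}: <q_i, <a_j, 1^n>, q_i> *)
      [&& 1 <= p <= n, p != 1, p != j, p' == p & m == n],
      (* case i = 1: <q_1, <a_j, 1^(n+j-1)>, q_j> *)
      [&& p == 1, p' == j & m == n + j - 1],
      (* case i = j <> 1: <q_j, <a_j, 1^(n-j+1)>, q_1> *)
      [&& 1 <= p <= n, p != 1, p == j, p' == 1 & m == n - j + 1]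
    | (* Delta_{f,n}: <q_i, <a_j, 1^(2n-i+1)>, f> for j <= i *)
      [&& 1 <= p <= n, j <= p, p' == n.+1 & m == 2 * n - p + 1] ].

Definition Tdelta (n : nat) (p : Tstate n) (a : Tletter n) (m : nat) (p' : Tstate n)
  : Prop := Tdelta_nat n p a.+1 m p'.

Definition T_ (n : nat) : transducer (Tstate n) (Tletter n) :=
  Transducer (fun _ => True) (fun q => q = st_s n) (fun q => q = st_f n) (@Tdelta n).

Section Det.
Variables (Q : finType) (A : Type).

Definition det_step (T : transducer Q A) (x : Q * {set Q}) (a : A) (v : nat)
    (y : Q * {set Q}) : Prop :=
  [/\ ttrans T x.1 a v y.1,
      (forall q', q' \in y.2 <->
         ((exists2 q, q \in x.2 & exists v', ttrans T q a v' q') \/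
          (exists v', v' < v /\ ttrans T x.1 a v' q')))
    & y.1 \notin y.2].

Inductive det_gen (T : transducer Q A) (i : Q) : Q * {set Q} -> Prop :=
| det_gen0 : det_gen T i (i, set0)
| det_genS x a v y : det_gen T i x -> det_step T x a v y -> det_gen T i y.

Definition det (T : transducer Q A) (i : Q) : transducer (Q * {set Q}) A :=
  Transducer (det_gen T i)
    (fun x => x = (i, set0))
    (fun x => [/\ det_gen T i x, tfinal T x.1 & forall q, q \in x.2 -> ~ tfinal T q])
    (fun x a v y => det_gen T i x /\ det_step T x a v y).
End Det.

Section Trim.
Variables (Q A : Type) (T : transducer Q A).

Inductive accessible : Q -> Prop :=
| acc0 q : tstate T q -> tinit T q -> accessible q
| accS p a v q : accessible p -> ttrans T p a v q -> accessible q.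

Inductive coaccessible : Q -> Prop :=
| coacc0 q : tstate T q -> tfinal T q -> coaccessible q
| coaccS p a v q : ttrans T p a v q -> coaccessible q -> coaccessible p.

Definition kept (q : Q) : Prop := [/\ tstate T q, accessible q & coaccessible q].

Definition trim : transducer Q A :=
  Transducer kept
    (fun q => tinit T q /\ kept q)
    (fun q => tfinal T q /\ kept q)
    (fun p a v q => [/\ ttrans T p a v q, kept p & kept q]).
End Trim.

Definition underlying (Q A : Type) (T : transducer Q A) : automaton Q A :=
  Automaton (tstate T) (tinit T) (tfinal T) (fun p a q => exists m, ttrans T p a m q).

Definition reversal (Q A : Type) (M : automaton Q A) : automaton Q A :=
  Automaton (astate M) (afinal M) (ainit M) (fun p a q => atrans M q a p).

Inductive subset_reach (Q : finType) (A : Type) (M : automaton Q A) : {set Q} -> Prop :=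
| sr_init (P : {set Q}) : (forall q, q \in P <-> (astate M q /\ ainit M q)) -> subset_reach M P
| sr_step (P : {set Q}) a (P' : {set Q}) : subset_reach M P ->
    (forall q, q \in P' <-> exists2 p, p \in P & atrans M p a q) -> subset_reach M P'.

Definition T'_ (n : nat) : transducer (Tstate n * {set Tstate n}) (Tletter n) :=
  trim (det (T_ n) (st_s n)).

From mathcomp Require Import all_boot fingroup perm zify boolp.
Set Implicit Arguments. Unset Strict Implicit. Unset Printing Implicit Defensive.

(* Write q_k for the paper's q_(k+1) and sw j for the transposition (0 j) of {0, ..., n-1}.
   From q_k the letter a_(j+1) leads to q_(sw j k), and also to f when j <= k, with a strictly
   larger output.  Hence the determinization sends <q_p, q(N)> (p \notin N, possibly with f
   added) to <q_(sw j p), q(sw j N)>, and, if j <= p and no element of N is >= j, to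
   <f, q(sw j (p |: N))>.  As the sw j generate the symmetric group, every <q_p, q(N)> with p \notin N is
   reached, and it is co-reachable through q_max -a_n-> f; counting these states gives (1).
   Forward, the subset reached on a_1 w a_1 contains the <q_(r i), q(r {0, ..., i-1})> for all i,
   where r is the product of the sw along w, so it determines r: this gives n! subsets (2).
   Backward, <q_p, {}> reads w a_(j+1) into a final state iff j <= r p.  Choosing r mapping a
   nonempty A onto the #|A| largest indices and j = n - #|A| selects exactly the p in A, so
   the 2^n - 1 nonempty sets A give distinct subsets (3). *)

Lemma exists_perm_imset (T : finType) (A B : {set T}) :
  #|A| = #|B| -> exists r : {perm T}, r @: A = B.
Proof.
move=> cardAB.
set s := enum A ++ enum (~: A); set t := enum B ++ enum (~: B).
have size_s : size s = #|T| by rewrite size_cat -!cardE cardsC.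
have size_t : size t = #|T| by rewrite size_cat -!cardE cardsC.
have uniq_t : uniq t.
  by rewrite cat_uniq !enum_uniq andbT /=; apply/hasPn => x; rewrite !mem_enum inE.
have mem_s x : x \in s by rewrite mem_cat !mem_enum inE; case: (x \in A).
pose f x := nth x t (index x s).
have f_inj : injective f.
  move=> x y; have ix : index x s < size t by rewrite size_t -size_s index_mem.
  rewrite /f (set_nth_default y x ix) => /eqP; rewrite nth_uniq ?size_t -?size_s ?index_mem //.
  by move=> /eqP eq_ix; rewrite -(nth_index x (mem_s x)) eq_ix nth_index.
exists (perm f_inj); apply/eqP.
rewrite eqEcard card_imset ?cardAB ?leqnn ?andbT; last exact: perm_inj.
apply/subsetP => _ /imsetP [x xA ->]; rewrite permE /f /s index_cat mem_enum xA /t nth_cat.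
have -> : index x (enum A) < size (enum B) by rewrite -cardE -cardAB cardE index_mem mem_enum.
by rewrite -(mem_enum B) mem_nth // -cardE -cardAB cardE index_mem mem_enum.
Qed.

(* Conjugating [tperm x0 y] by [tperm x0 x] gives [tperm x (tperm x0 x y)], so
   every transposition is a product of three transpositions through [x0]. *)
Lemma prod_tperm_pivot (T : finType) (x0 : T) (r : {perm T}) :
  exists w : seq T, r = (\prod_(y <- w) tperm x0 y)%g.
Proof.
have [ts -> _] := prod_tpermP r.
exists (flatten [seq [:: t.1; tperm x0 t.1 t.2; t.1] | t <- ts]).
elim: ts => [|[x z] ts IH]; first by rewrite !big_nil.
rewrite big_cons /= -cat1s big_cat IH !big_cons big_nil /= mulg1 !mulgA; congr (_ * _)%g.
by rewrite -{1}(tpermV x0 x) -mulgA -conjgE tpermJ tpermL tpermK.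
Qed.

Lemma card_disjoint_setU (T : finType) (A B : {set T}) :
  {in A, forall x, x \notin B} -> #|A :|: B| = #|A| + #|B|.
Proof.
move=> AnB; apply/eqP; rewrite (eq_leqif (leq_card_setU A B)) disjoint_subset.
by apply/subsetP => x /AnB.
Qed.

Lemma card_notin_pairs (T : finType) :
  #|[set pN : T * {set T} | pN.1 \notin pN.2]| = #|T| * 2 ^ #|T|.-1.
Proof.
rewrite -sum1_card (eq_bigl (fun pN : T * {set T} => true && (pN.1 \notin pN.2))); last first.
  by move=> pN; rewrite inE.
rewrite -(pair_big_dep xpredT (fun (p : T) (N : {set T}) => p \notin N) (fun _ _ => 1)) /=.
rewrite (eq_bigr (fun _ => 2 ^ #|T|.-1)) ?sum_nat_const // => p _.
rewrite sum1_card -(cardsC1 p) -card_powerset; apply: eq_card => N.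
by rewrite powersetE subsetC sub1set !inE.
Qed.

Lemma mem_powersetC1 (T : finType) (x : T) (A : {set T}) :
  (A \in powerset [set~ x]) = (x \notin A).
Proof. by rewrite powersetE subsetC sub1set !inE. Qed.

Lemma card_ltn_ord (n k : nat) : k <= n -> #|[set i : 'I_n | i < k]| = k.
Proof.
move=> kn; have widen_inj : injective (widen_ord kn) by move=> i i' [/val_inj].
rewrite -[RHS]card_ord -(card_imset _ widen_inj).
apply: eq_card => i; rewrite inE; apply/idP/imsetP => [ik|[i' _ ->]]; last exact: (ltn_ord i').
by exists (Ordinal ik) => //; apply: val_inj.
Qed.

Lemma imset_perm1 (T : finType) (A : {set T}) : (1%g : {perm T}) @: A = A.
Proof. by rewrite (eq_imset _ (@perm1 _)) imset_id. Qed.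

Lemma imset_permM (T : finType) (r s : {perm T}) (A : {set T}) :
  (r * s)%g @: A = s @: (r @: A).
Proof. by rewrite -imset_comp; apply: eq_imset => x; rewrite permM. Qed.

Section DetStep.
Variables (Q : finType) (A : Type) (T : transducer Q A).

Definition det_succ (x : Q * {set Q}) (a : A) (v : nat) (q' : Q) : Prop :=
  (exists2 q, q \in x.2 & exists v', ttrans T q a v' q') \/
  (exists v', v' < v /\ ttrans T x.1 a v' q').

Lemma det_stepE x a v (Y : {set Q}) :
  (forall q', q' \in Y <-> det_succ x a v q') ->
  forall y, det_step T x a v y <-> [/\ ttrans T x.1 a v y.1, y.2 = Y & y.1 \notin Y].
Proof.
move=> memY y; rewrite /det_step; split => [[xy succ_y y_new]|[xy -> y_new]]; last by split.
have eY : y.2 = Y by apply/setP => q; apply/idP/idP => ?; [apply/memY/succ_y | apply/succ_y/memY].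
by split; rewrite -?eY.
Qed.

End DetStep.

Section SubsetConstruction.
Variables (Q : finType) (A : Type) (M : automaton Q A).

Definition subset_init : {set Q} := [set q | `[< astate M q /\ ainit M q >]].

Definition subset_next (P : {set Q}) (a : A) : {set Q} :=
  [set q | `[< exists2 p, p \in P & atrans M p a q >]].

Definition subset_run (w : seq A) : {set Q} := foldl subset_next subset_init w.

Lemma subset_initP q : reflect (astate M q /\ ainit M q) (q \in subset_init).
Proof. by rewrite inE; apply: asboolP. Qed.

Lemma subset_nextP (P : {set Q}) a q :
  reflect (exists2 p, p \in P & atrans M p a q) (q \in subset_next P a).
Proof. by rewrite inE; apply: asboolP. Qed.

Lemma subset_run_rcons w a : subset_run (rcons w a) = subset_next (subset_run w) a.
Proof. by rewrite /subset_run foldl_rcons. Qed.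

Lemma subset_reach_run w : subset_reach M (subset_run w).
Proof.
elim/last_ind: w => [|w a IH]; first by apply: sr_init => q; exact: iff_sym (rwP (subset_initP q)).
by rewrite subset_run_rcons; apply: (sr_step IH) => q; exact: iff_sym (rwP (subset_nextP _ _ q)).
Qed.

End SubsetConstruction.

Section Proposition9.
Variable m : nat.
Local Notation n := m.+1.

Implicit Types (p k j : 'I_n) (N A : {set 'I_n}) (b : bool).

(* [stq k] is the paper's q_(k+1). *)
Definition stq k : Tstate n := inord k.+1.

Lemma stq_val k : stq k = k.+1 :> nat.
Proof. by rewrite /stq inordK //; have := ltn_ord k; lia. Qed.

Lemma stq_inj : injective stq.
Proof. move=> k k' /(congr1 val); rewrite /= !stq_val => -[eq_k]; exact: val_inj. Qed.

Lemma stq_neq_f k : (stq k == st_f n) = false.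
Proof. by apply/negbTE; rewrite -val_eqE /= stq_val eqSS neq_ltn ltn_ord. Qed.

Lemma stq_neq_s k : (stq k == st_s n) = false.
Proof. by apply/negbTE; rewrite -val_eqE /= stq_val. Qed.

Local Notation sw j := (tperm ord0 j).

Lemma sw0 : sw (ord0 : 'I_n) = 1%g.
Proof. exact: tperm1. Qed.

Lemma mem_imset_sw j k N : (sw j k \in sw j @: N) = (k \in N).
Proof. by rewrite mem_imset //; exact: perm_inj. Qed.

Lemma sw_val j k :
  sw j k = (if k == ord0 then nat_of_ord j else if k == j then 0 else nat_of_ord k) :> nat.
Proof.
case: tpermP => [->|->|/eqP/negbTE k0 /eqP/negbTE kj]; first by rewrite eqxx.
  by case: (j =P ord0) => [->|j0]; rewrite ?eqxx // ifN ?eqxx //; apply/eqP.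
by rewrite k0 kj.
Qed.

Definition swap_out k j : nat :=
  if k == ord0 then n + j else if k == j then n - j else n.

Lemma swap_out_lt k j : swap_out k j < 2 * n - k.
Proof.
rewrite /swap_out; have := ltn_ord k; have := ltn_ord j.
by case: ifP => [/eqP -> /=|_]; [|case: ifP]; lia.
Qed.

Lemma Tdelta_nat_q (k j q v : nat) : k < n -> j < n -> q < n.+2 ->
  Tdelta_nat n k.+1 j.+1 v q =
  [|| [&& k == 0, q == j.+1 & v == n + j], [&& k != 0, k == j, q == 1 & v == n - j],
      [&& k != 0, k != j, q == k.+1 & v == n] | [&& q == n.+1, j <= k & v == 2 * n - k]].
Proof.
move=> kn jn qn; rewrite /Tdelta_nat /= eqSS kn /=.
by case: (k =P 0) => [->|/eqP k0] /=; lia.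
Qed.

(* [sw j] packs the three cases of Delta_Q. *)
Lemma Tdelta_stq k j v q :
  Tdelta (stq k) j v q =
  ((q == stq (sw j k)) && (v == swap_out k j)) || [&& q == st_f n, j <= k & v == 2 * n - k].
Proof.
rewrite /Tdelta stq_val Tdelta_nat_q //.
have -> : (q == stq (sw j k)) = (nat_of_ord q == (sw j k).+1) by rewrite -val_eqE /= stq_val.
have -> : (q == st_f n) = (nat_of_ord q == n.+1) by rewrite -val_eqE.
rewrite sw_val /swap_out -!val_eqE /=.
by case: (nat_of_ord k == 0); case: (nat_of_ord k == j).
Qed.

Lemma Tdelta_s j v q : Tdelta (st_s n) j v q = [&& 1 <= q <= n & v == q.-1].
Proof. by rewrite /Tdelta /Tdelta_nat /= orbF. Qed.

Lemma Tdelta_f j v q : Tdelta (st_f n) j v q = false.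
Proof. by rewrite /Tdelta /Tdelta_nat /= ltnn. Qed.

(** * Determinized states *)

(* The determinized states met along the way are [<q_p, qset N b>] with [p \notin N]:
   [b] records whether [f] belongs to the second component. *)
Definition qset N b : {set Tstate n} :=
  stq @: N :|: (if b then [set st_f n] else set0).

Lemma stq_qset k N b : (stq k \in qset N b) = (k \in N).
Proof. by rewrite inE (mem_imset _ _ stq_inj); case: b; rewrite ?inE ?stq_neq_f orbF. Qed.

Lemma f_notin_imset_stq N : st_f n \notin stq @: N.
Proof. by apply/imsetP => -[k _ /eqP]; rewrite eq_sym stq_neq_f. Qed.

Lemma f_qset N b : (st_f n \in qset N b) = b.
Proof. by rewrite inE (negbTE (f_notin_imset_stq N)); case: b; rewrite !inE ?eqxx. Qed.

Lemma qsetP q N b :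
  q \in qset N b -> (q = st_f n /\ b) \/ exists2 k, k \in N & q = stq k.
Proof.
rewrite inE => /orP [/imsetP [k kN ->]|]; first by right; exists k.
by case: b; rewrite ?inE // => /eqP ->; left.
Qed.

Lemma qset_false N : qset N false = stq @: N.
Proof. by rewrite /qset setU0. Qed.

Lemma qset_inj N b N' b' : qset N b = qset N' b' -> N = N' /\ b = b'.
Proof.
move=> eq_qset; split; last by rewrite -(f_qset N b) eq_qset f_qset.
by apply/setP => k; rewrite -(stq_qset k N b) eq_qset stq_qset.
Qed.

Definition hits_f N j := [exists k in N, j <= k].

Lemma hits_f0 j : hits_f set0 j = false.
Proof. by apply/negbTE/existsP => -[k]; rewrite inE. Qed.

Lemma hits_f_ord0 N : hits_f N ord0 = (N != set0).
Proof.
apply/existsP/set0Pn => [[k /andP [kN _]]|[k kN]]; first by exists k.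
by exists k; rewrite kN.
Qed.

Lemma hits_f_max N : ord_max \notin N -> ~~ hits_f N ord_max.
Proof.
move=> maxN; apply/existsP => -[k /andP [kN max_k]].
have eq_k : k = ord_max by apply/val_inj/eqP; rewrite eqn_leq leq_ord max_k.
by rewrite -eq_k kN in maxN.
Qed.

Lemma image_qset N b j q :
  (exists2 p, p \in qset N b & exists v, Tdelta p j v q) <->
  q \in qset (sw j @: N) (hits_f N j).
Proof.
split=> [[_ /qsetP [[-> _]|[k kN ->]] [v]]|/qsetP [[-> /existsP [k /andP [kN jk]]]|]].
- by rewrite Tdelta_f.
- rewrite Tdelta_stq => /orP [/andP [/eqP -> _]|/and3P [/eqP -> jk _]].
    by rewrite stq_qset imset_f.
  by rewrite f_qset; apply/existsP; exists k; rewrite kN.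
- exists (stq k); first by rewrite stq_qset.
  by exists (2 * n - k); rewrite Tdelta_stq eqxx jk eqxx orbT.
- move=> [_ /imsetP [k kN ->] ->]; exists (stq k); first by rewrite stq_qset.
  by exists (swap_out k j); rewrite Tdelta_stq !eqxx.
Qed.

Local Notation T := (T_ n).

Definition swap_conf p N j := (stq (sw j p), qset (sw j @: N) (hits_f N j)).
Definition final_conf p N j := (st_f n, stq @: (sw j @: (p |: N))).

Lemma det_succ_swap p N b j q :
  q \in qset (sw j @: N) (hits_f N j) <-> det_succ T (stq p, qset N b) j (swap_out p j) q.
Proof.
split=> [/(image_qset N b)|[/(image_qset N b) //|[v [lt_v]]]]; first by left.
rewrite /= Tdelta_stq => /orP [/andP [_ /eqP eq_v]|/and3P [_ _ /eqP eq_v]].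
  by move: lt_v; rewrite eq_v ltnn.
by move: lt_v; rewrite eq_v ltnNge ltnW ?swap_out_lt.
Qed.

Lemma det_succ_final p N b j q :
  q \in qset (sw j @: N) (hits_f N j) :|: [set stq (sw j p)] <->
  det_succ T (stq p, qset N b) j (2 * n - p) q.
Proof.
rewrite in_setU; split.
- case/orP=> [/(image_qset N b)|/set1P ->]; first by left.
  by right; exists (swap_out p j); rewrite swap_out_lt /= Tdelta_stq !eqxx.
- case=> [/(image_qset N b) -> //|[v [lt_v]]]; rewrite /= Tdelta_stq.
  case/orP=> [/andP [/eqP -> _]|/and3P [_ _ /eqP eq_v]]; first by rewrite set11 orbT.
  by move: lt_v; rewrite eq_v ltnn.
Qed.

Lemma final_conf_set p N j : ~~ hits_f N j ->
  qset (sw j @: N) (hits_f N j) :|: [set stq (sw j p)] = stq @: (sw j @: (p |: N)).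
Proof. by move/negbTE->; rewrite qset_false !imsetU1 setUC. Qed.

Lemma det_step_swap p N b j : p \notin N ->
  det_step T (stq p, qset N b) j (swap_out p j) (swap_conf p N j).
Proof.
move=> pN; apply/(det_stepE (det_succ_swap p N b j)); split => /=.
- by rewrite Tdelta_stq !eqxx.
- by [].
- by rewrite stq_qset mem_imset_sw.
Qed.

Lemma det_step_final p N b j : j <= p -> ~~ hits_f N j ->
  det_step T (stq p, qset N b) j (2 * n - p) (final_conf p N j).
Proof.
move=> jp Nj; apply/(det_stepE (det_succ_final p N b j)); split => /=.
- by rewrite Tdelta_stq jp !eqxx orbT.
- by rewrite final_conf_set.
- by rewrite final_conf_set ?f_notin_imset_stq.
Qed.

Lemma det_step_stqP p N b j v y : det_step T (stq p, qset N b) j v y ->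
  y = swap_conf p N j \/ [/\ j <= p, ~~ hits_f N j & y = final_conf p N j].
Proof.
case: y => y1 y2 step; have [/= + _ _] := step; rewrite Tdelta_stq.
case/orP=> [/andP [/eqP eq_y1 /eqP eq_v]|/and3P [/eqP eq_y1 jp /eqP eq_v]]; subst y1 v.
  by have [_ /= -> _] := (det_stepE (det_succ_swap p N b j) _).1 step; left.
have [_ /= eq_y2 f_new] := (det_stepE (det_succ_final p N b j) _).1 step.
have Nj : ~~ hits_f N j by move: f_new; rewrite in_setU f_qset negb_or => /andP [].
by right; rewrite eq_y2 final_conf_set.
Qed.

Definition below k : {set 'I_n} := [set i : 'I_n | i < k].

Lemma below_notin k : k \notin below k.
Proof. by rewrite inE ltnn. Qed.

Lemma below0 : below ord0 = set0.
Proof. by apply/setP => i; rewrite !inE. Qed.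

Lemma det_succ_init j k q :
  q \in qset (below k) false <-> det_succ T (st_s n, set0) j k q.
Proof.
rewrite /det_succ /= qset_false; split.
  case/imsetP=> i; rewrite inE => ik ->; right; exists i; split => //.
  by rewrite Tdelta_s stq_val /= eqxx andbT ltn_ord.
case=> [[?]|[v [lt_v]]]; first by rewrite inE.
rewrite Tdelta_s => /andP [/andP [q_gt0 q_le] /eqP eq_v].
have lt_q : q.-1 < n by lia.
rewrite (_ : q = stq (Ordinal lt_q)); last by apply: val_inj; rewrite /= stq_val /=; lia.
by rewrite imset_f // inE /=; lia.
Qed.

Lemma det_step_init j k : det_step T (st_s n, set0) j k (stq k, qset (below k) false).
Proof.
apply/(det_stepE (det_succ_init j k)); split => //=.
- by rewrite Tdelta_s stq_val /= eqxx andbT ltn_ord.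
- by rewrite stq_qset below_notin.
Qed.

Lemma det_step_initP j v y : det_step T (st_s n, set0) j v y ->
  exists k, y = (stq k, qset (below k) false).
Proof.
case: y => y1 y2 step; have [/= + _ _] := step.
rewrite Tdelta_s => /andP [/andP [y1_gt0 y1_le] /eqP eq_v].
have lt_y1 : y1.-1 < n by lia.
have eq_y1 : y1 = stq (Ordinal lt_y1) by apply: val_inj; rewrite /= stq_val /=; lia.
exists (Ordinal lt_y1); subst v.
by have [_ /= -> _] := (det_stepE (det_succ_init j (Ordinal lt_y1)) _).1 step; rewrite -eq_y1.
Qed.

Lemma det_step_from_f x j v y : x.1 = st_f n -> ~ det_step T x j v y.
Proof. by move=> x_f [+ _ _]; rewrite /= x_f Tdelta_f. Qed.

(** * Accessibility and co-accessibility *)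

Local Notation D := (det T (st_s n)).
Local Notation G := (det_gen T (st_s n)).

Lemma accessible_gen x : G x -> accessible D x.
Proof.
elim=> [|x' a v y gen_x' IH step]; first by apply: acc0; first exact: det_gen0.
exact: accS IH (conj gen_x' step).
Qed.

Lemma coaccessible_step x a v y :
  G x -> det_step T x a v y -> coaccessible D y -> coaccessible D x.
Proof. by move=> gen_x step; apply: coaccS; split; last exact: step. Qed.

Lemma kept_final (M : {set 'I_n}) : G (st_f n, stq @: M) -> kept D (st_f n, stq @: M).
Proof.
move=> gen_x; split; [exact: gen_x | exact: accessible_gen | apply: coacc0 => //].
by split => // q /imsetP [k _ ->] /eqP; rewrite stq_neq_f.
Qed.

(* [q_max] reaches [f] on [a_n], [q_0] reaches [q_max] on [a_n] and any [q_p] reaches [q_0]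
   on [a_(p+1)]. *)
Lemma coaccessible_stq p N b :
  G (stq p, qset N b) -> p \notin N -> coaccessible D (stq p, qset N b).
Proof.
have from_max N' b' : G (stq ord_max, qset N' b') -> ord_max \notin N' ->
    coaccessible D (stq ord_max, qset N' b').
  move=> gen_x maxN; have step := det_step_final b' (leqnn _) (hits_f_max maxN).
  by apply: (coaccessible_step gen_x step); case: (kept_final (det_genS gen_x step)).
have from_ord0 N' b' : G (stq ord0, qset N' b') -> ord0 \notin N' ->
    coaccessible D (stq ord0, qset N' b').
  move=> gen_x N'0; have step := det_step_swap b' ord_max N'0.
  apply: (coaccessible_step gen_x step); rewrite /swap_conf tpermL.
  apply: from_max; first by have := det_genS gen_x step; rewrite /swap_conf tpermL.
  by rewrite -{1}(tpermL ord0 ord_max) mem_imset_sw.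
move=> gen_x pN; have step := det_step_swap b p pN.
apply: (coaccessible_step gen_x step); rewrite /swap_conf tpermR.
apply: from_ord0; first by have := det_genS gen_x step; rewrite /swap_conf tpermR.
by rewrite -{1}(tpermR ord0 p) mem_imset_sw.
Qed.

Lemma kept_stq p N b : G (stq p, qset N b) -> p \notin N -> kept D (stq p, qset N b).
Proof. by move=> gen_x pN; split; [| exact: accessible_gen | exact: coaccessible_stq]. Qed.

Lemma gen_below k : G (stq k, qset (below k) false).
Proof. exact: det_genS (det_gen0 _ _) (det_step_init ord0 k). Qed.

Lemma kept_below k : kept D (stq k, qset (below k) false).
Proof. exact: kept_stq (gen_below k) (below_notin k). Qed.

Lemma kept_s : kept D (st_s n, set0).
Proof.
split; [exact: det_gen0 | exact: accessible_gen (det_gen0 _ _) |].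
by apply: coaccessible_step (det_gen0 _ _) (det_step_init ord0 ord0) _; case: (kept_below ord0).
Qed.

(** * Every configuration is reached *)

Definition swaps (w : seq 'I_n) : {perm 'I_n} := (\prod_(j <- w) sw j)%g.

Implicit Types (r : {perm 'I_n}) (w : seq 'I_n).

Lemma swaps_cons j w : swaps (j :: w) = (sw j * swaps w)%g.
Proof. by rewrite /swaps big_cons. Qed.

Lemma swaps_cat w1 w2 : swaps (w1 ++ w2) = (swaps w1 * swaps w2)%g.
Proof. by rewrite /swaps big_cat. Qed.

Lemma swaps_surj r : exists w, swaps w == r.
Proof. by have [w ->] := prod_tperm_pivot ord0 r; exists w. Qed.

Definition word_of r : seq 'I_n := xchoose (swaps_surj r).

Lemma swaps_word_of r : swaps (word_of r) = r.
Proof. exact/eqP/(xchooseP (swaps_surj r)). Qed.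

Lemma gen_swaps w p N b : G (stq p, qset N b) -> p \notin N ->
  exists b', G (stq (swaps w p), qset (swaps w @: N) b').
Proof.
elim: w p N b => [|j w IH] p N b gen_x pN.
  by exists b; rewrite /swaps big_nil perm1 imset_perm1.
have step := det_step_swap b j pN.
have swpN : sw j p \notin sw j @: N by rewrite mem_imset_sw.
have [b' gen_y] := IH _ _ _ (det_genS gen_x step) swpN.
by exists b'; rewrite swaps_cons permM imset_permM.
Qed.

Lemma card_below k : #|below k| = k.
Proof. exact/card_ltn_ord/ltnW. Qed.

(* Start from [<q_k, below k>] with [k = #|N|] and move [below k] onto [N] and [k] onto [p]. *)
Lemma gen_conf p N : p \notin N -> exists b, G (stq p, qset N b).
Proof.
move=> pN; have lt_N : #|N| < n.
  have : N \subset [set~ p] by apply/subsetP => i iN; rewrite !inE; apply: contraNneq pN => <-.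
  by move/subset_leq_card; rewrite cardsC1 card_ord.
pose k := Ordinal lt_N.
have [r1 r1_below] := exists_perm_imset (card_below k).
pose r := (r1 * tperm (r1 k) p)%g.
have r1k_N : r1 k \notin N by rewrite -r1_below mem_imset ?below_notin //; exact: perm_inj.
have r_k : r k = p by rewrite permM tpermL.
have r_below : r @: below k = N.
  rewrite imset_permM r1_below -[RHS]imset_id; apply: eq_in_imset => i iN.
  by apply: tpermD; [apply: (contraNneq _ r1k_N) | apply: (contraNneq _ pN)] => ->.
have [b] := gen_swaps (word_of r) (gen_below k) (below_notin k).
by rewrite swaps_word_of r_k r_below; exists b.
Qed.

(** * States of T'_n *)

Lemma gen_conf_flagged p N : p \notin N -> G (stq p, qset N (N != set0)).
Proof.
move=> pN; have [b gen_x] := gen_conf pN.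
have := det_genS gen_x (det_step_swap b ord0 pN).
by rewrite /swap_conf sw0 perm1 imset_perm1 hits_f_ord0.
Qed.

Lemma imset_sw_invol j N : sw j @: (sw j @: N) = N.
Proof. by rewrite -imset_permM tperm2 imset_perm1. Qed.

Lemma max_notin_imset_sw N : ord0 \notin N -> ord_max \notin sw ord_max @: N.
Proof. by rewrite -{1}(tpermL ord0 ord_max) mem_imset_sw. Qed.

Lemma gen_conf_ord0 N : ord0 \notin N -> G (stq ord0, qset N false).
Proof.
move=> N0; have maxN := max_notin_imset_sw N0; have [b gen_x] := gen_conf maxN.
have := det_genS gen_x (det_step_swap b ord_max maxN).
by rewrite /swap_conf tpermR imset_sw_invol (negbTE (hits_f_max maxN)).
Qed.

Lemma gen_final N : ord0 \notin N -> G (st_f n, stq @: (ord0 |: N)).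
Proof.
move=> N0; have maxN := max_notin_imset_sw N0; have [b gen_x] := gen_conf maxN.
have := det_genS gen_x (det_step_final b (leqnn _) (hits_f_max maxN)).
by rewrite /final_conf imsetU1 tpermR imset_sw_invol.
Qed.

Local Notation X := (Tstate n * {set Tstate n})%type.

(* Among the kept states are [<s, {}>], [<q_p, qset N (N != {})>] for [p \notin N],
   [<q_0, qset N false>] for [N] nonempty without [0] and [<f, {q_0} :|: q N>] for [0 \notin N]:
   [1 + n 2^(n-1) + (2^(n-1) - 1) + 2^(n-1) = (n + 2) 2^(n-1)] states. *)
Lemma card_states_T' : exists S : {set X},
  (2 * n + 3) * 2 ^ n <= 4 * #|S| /\ forall x, x \in S -> kept D x.
Proof.
pose pairs := [set pN : 'I_n * {set 'I_n} | pN.1 \notin pN.2].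
pose F1 := [set (stq pN.1, qset pN.2 (pN.2 != set0)) | pN in pairs].
pose F2 := [set (stq ord0, qset N false) | N in powerset [set~ ord0] :\ set0].
pose F3 := [set (st_f n, stq @: (ord0 |: N)) | N in powerset [set~ ord0]].
exists ((st_s n, set0) |: (F1 :|: F2 :|: F3)); split; last first.
  move=> x; rewrite !inE => /orP [/eqP ->|/orP [/orP [|]|]]; first exact: kept_s.
  - by case/imsetP=> -[p N]; rewrite inE /= => pN ->; apply: kept_stq (gen_conf_flagged pN) pN.
  - case/imsetP=> N; rewrite in_setD1 mem_powersetC1 => /andP [_ N0] ->.
    exact: kept_stq (gen_conf_ord0 N0) N0.
  - by case/imsetP=> N; rewrite mem_powersetC1 => N0 ->; apply: kept_final (gen_final N0).
have card_pow : #|powerset [set~ (ord0 : 'I_n)]| = 2 ^ m by rewrite card_powerset cardsC1 card_ord.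
have card_F1 : #|F1| = n * 2 ^ m.
  rewrite card_in_imset ?card_notin_pairs ?card_ord //.
  by move=> [p N] [p' N'] _ _ [/stq_inj -> /qset_inj [-> _]].
have card_F2 : #|F2| = 2 ^ m - 1.
  rewrite card_in_imset; last by move=> N N' _ _ [/qset_inj []].
  have := cardsD1 set0 (powerset [set~ (ord0 : 'I_n)]).
  by rewrite card_pow mem_powersetC1 inE => ->; rewrite addKn.
have card_F3 : #|F3| = 2 ^ m.
  rewrite card_in_imset ?card_pow // => N N'; rewrite !mem_powersetC1 => N0 N'0.
  by case=> /(imset_inj stq_inj) eq_N; rewrite -(setU1K N0) eq_N setU1K.
have s_new : (st_s n, set0) \notin F1 :|: F2 :|: F3.
  by apply/negP => /setUP [/setUP []|] /imsetP [? _ [/eqP]]; rewrite // eq_sym stq_neq_s.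
rewrite cardsU1 s_new card_disjoint_setU; last first.
  move=> x /setUP [] /imsetP [? _ ->]; apply/imsetP => -[? _ [/eqP]]; by rewrite stq_neq_f.
rewrite card_disjoint_setU; last first.
  move=> x /imsetP [[p N] /=]; rewrite inE /= => _ ->.
  apply/imsetP => -[N' N'_ne [_ /qset_inj [eq_N eq_b]]].
  by move: N'_ne; rewrite in_setD1 -eq_N eq_b.
rewrite card_F1 card_F2 card_F3 expnS.
by have := expn_gt0 2 m; lia.
Qed.

(** * Forward subset construction *)

Local Notation U := (underlying (T'_ n)).

Lemma atrans_T' x a y :
  atrans U x a y <-> [/\ kept D x, kept D y & exists v, det_step T x a v y].
Proof.
split=> [[v [[_ step] kx ky]]|[kx ky [v step]]]; first by split=> //; exists v.
by exists v; split=> //; split=> //; case: kx.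
Qed.

Lemma mem_run0 x : x \in subset_run U [::] <-> x = (st_s n, set0).
Proof.
split=> [/subset_initP [_ []] //|->].
by apply/subset_initP; split; [exact: kept_s | split; last exact: kept_s].
Qed.

Definition conf r i b := (stq (r i), qset (r @: below i) b).

(* After reading [a_1 w], the non-final states of the subset are the [conf r i b] for
   [r = swaps w], and each [i] occurs. *)
Definition fwd_inv r (P : {set X}) := [/\
  {in P, forall y, kept D y},
  {in P, forall y, y.1 != st_s n /\ (y.1 != st_f n -> exists i b, y = conf r i b)} &
  forall i, exists b, conf r i b \in P].

Lemma fwd_inv_next r P j : fwd_inv r P -> fwd_inv (r * sw j)%g (subset_next U P j).
Proof.
case=> kept_P shape_P full_P; split.
- by move=> y /subset_nextP [x _ /atrans_T' []].
- move=> y /subset_nextP [x xP /atrans_T' [_ _ [v step]]].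
  have [_ shape_x] := shape_P x xP.
  have [x_f|/shape_x [i [b x_conf]]] := eqVneq x.1 (st_f n).
    by case: (det_step_from_f x_f step).
  rewrite x_conf in step; case: (det_step_stqP step) => [->|[_ _ ->]] /=; last by rewrite eqxx.
  rewrite stq_neq_s; split=> // _; exists i, (hits_f (r @: below i) j).
  by rewrite /conf permM imset_permM.
- move=> i; have [b x_P] := full_P i; exists (hits_f (r @: below i) j).
  have [gen_x _ _] := kept_P _ x_P.
  have ri_new : r i \notin r @: below i by rewrite mem_imset ?below_notin //; exact: perm_inj.
  have step := det_step_swap b j ri_new.
  apply/subset_nextP; exists (conf r i b) => //; rewrite /conf permM imset_permM.
  apply/atrans_T'; split; [exact: kept_P | | by exists (swap_out (r i) j)].
  by apply: kept_stq (det_genS gen_x step) _; rewrite mem_imset_sw.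
Qed.

Lemma fwd_inv_run r P w :
  fwd_inv r P -> fwd_inv (r * swaps w)%g (foldl (subset_next U) P w).
Proof.
elim: w r P => [|j w IH] r P inv_P; first by rewrite /swaps big_nil mulg1.
by rewrite swaps_cons mulgA; apply/IH/fwd_inv_next.
Qed.

Lemma run_a1P y : y \in subset_run U [:: ord0] -> exists k, y = conf 1 k false.
Proof.
case/subset_nextP=> x /mem_run0 -> /atrans_T' [_ _ [v /det_step_initP [k ->]]].
by exists k; rewrite /conf perm1 imset_perm1.
Qed.

Lemma fwd_inv_a1 : fwd_inv 1 (subset_run U [:: ord0]).
Proof.
split.
- by move=> y /subset_nextP [x _ /atrans_T' []].
- by move=> y /run_a1P [k ->] /=; rewrite stq_neq_s; split=> // _; exists k, false.
- move=> i; exists false; apply/subset_nextP; exists (st_s n, set0); first exact/mem_run0.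
  apply/atrans_T'; split; [exact: kept_s | | exists i].
    by rewrite /conf perm1 imset_perm1; apply: kept_below.
  by rewrite /conf perm1 imset_perm1; apply: det_step_init.
Qed.

Lemma fwd_inv_uniq r r' P : fwd_inv r P -> fwd_inv r' P -> r = r'.
Proof.
case=> _ _ full_P [_ shape_P _]; apply/permP => i.
have [b x_P] := full_P i; have [_ /(_ (negbT (stq_neq_f _)))] := shape_P _ x_P.
case=> i' [b' [/stq_inj -> /qset_inj [eq_below _]]].
suff -> : i = i' by [].
apply/val_inj; rewrite /= -(card_below i) -(card_below i').
by rewrite -(card_imset _ (@perm_inj _ r)) eq_below card_imset //; exact: perm_inj.
Qed.

(* [a_1 (word_of r) a_1]: the last [a_1] sends [conf r 0 b] to [f]. *)
Definition run_perm r := subset_run U (ord0 :: word_of r ++ [:: ord0]).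

Lemma fwd_inv_run_perm r : fwd_inv r (run_perm r).
Proof.
have := fwd_inv_run (word_of r ++ [:: ord0]) fwd_inv_a1.
by rewrite swaps_cat swaps_word_of swaps_cons sw0 mul1g /swaps big_nil !mulg1.
Qed.

Lemma run_perm_inj : injective run_perm.
Proof.
move=> r r' eq_run; apply: (fwd_inv_uniq (fwd_inv_run_perm r)).
by rewrite eq_run; apply: fwd_inv_run_perm.
Qed.

Lemma final_in_run_perm r : exists2 y, y \in run_perm r & y.1 = st_f n.
Proof.
have [kept_P _ full_P] := fwd_inv_run (word_of r) fwd_inv_a1.
rewrite mul1g swaps_word_of in full_P; have [b x_P] := full_P ord0.
have [gen_x _ _] := kept_P _ x_P; move: x_P gen_x; rewrite /conf below0 imset0.
set x := (stq (r ord0), _) => x_P gen_x.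
have step := det_step_final (p := r ord0) (j := ord0) b (leq0n _) (negbT (hits_f0 ord0)).
exists (final_conf (r ord0) set0 ord0) => //.
rewrite /run_perm /subset_run /= foldl_cat /=; apply/subset_nextP; exists x => //.
apply/atrans_T'; split; [exact: kept_P | | by exists (2 * n - r ord0)].
exact: kept_final (det_genS gen_x step).
Qed.

Lemma card_subsets_T' : exists S : {set {set X}},
  n`! + 2 <= #|S| /\ forall P, P \in S -> subset_reach U P.
Proof.
exists (subset_run U [::] |: (subset_run U [:: ord0] |: [set run_perm r | r : {perm 'I_n}])).
split; last by move=> P; rewrite !inE => /orP [/eqP ->|/orP [/eqP ->|/imsetP [r _ ->]]];
  apply: subset_reach_run.
have s_run0 : (st_s n, set0) \in subset_run U [::] by apply/mem_run0.
have no_s r P : fwd_inv r P -> (st_s n, set0) \notin P.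
  by case=> _ shape_P _; apply/negP => /shape_P []; rewrite eqxx.
rewrite cardsU1 cardsU1 (card_imset _ run_perm_inj).
have -> : subset_run U [:: ord0] \notin [set run_perm r | r : {perm 'I_n}].
  apply/imsetP => -[r _ eq_run]; have [y] := final_in_run_perm r.
  by rewrite -eq_run => /run_a1P [k ->]; apply/eqP; rewrite stq_neq_f.
have -> : subset_run U [::] \notin subset_run U [:: ord0] |: [set run_perm r | r : {perm 'I_n}].
  rewrite !inE; apply/negP => /orP [/eqP eq_run|/imsetP [r _ eq_run]].
    by move: s_run0; rewrite eq_run; apply/negP/no_s/fwd_inv_a1.
  by move: s_run0; rewrite eq_run; apply/negP/no_s/fwd_inv_run_perm.
by rewrite card_Sn /= addn2.
Qed.

(** * Backward subset construction *)

Local Notation RU := (reversal U).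

Definition bwd (u : seq 'I_n) : {set X} := subset_run RU (rev u).

Lemma bwd_cons a u : bwd (a :: u) = subset_next RU (bwd u) a.
Proof. by rewrite /bwd rev_cons subset_run_rcons. Qed.

Lemma mem_bwd_cons x a u :
  x \in bwd (a :: u) <-> exists2 y, y \in bwd u & atrans U x a y.
Proof. by rewrite bwd_cons; apply: iff_sym; exact: rwP (subset_nextP RU _ _ _). Qed.

Lemma mem_bwd0 x : x \in bwd [::] -> x.1 = st_f n.
Proof. by case/subset_initP=> _ [[_ ->]]. Qed.

Lemma bwd_nonfinal x u : x \in bwd u -> u != [::] -> x.1 != st_f n.
Proof.
case: u => // a u /mem_bwd_cons [y _ /atrans_T' [_ _ [v step]]] _.
by apply/eqP => x_f; apply: det_step_from_f x_f step.
Qed.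

Lemma final_in_bwd0 p N b j : G (stq p, qset N b) -> j <= p -> ~~ hits_f N j ->
  final_conf p N j \in bwd [::].
Proof.
move=> gen_x jp Nj; have kept_y := kept_final (det_genS gen_x (det_step_final b jp Nj)).
apply/subset_initP; split=> //; split=> //; split=> //; first by case: kept_y.
by move=> q /imsetP [k _ ->] /eqP; rewrite stq_neq_f.
Qed.

Definition bare p := (stq p, qset set0 false).

Lemma kept_bare p : kept D (bare p).
Proof.
have p_new : p \notin set0 by rewrite inE.
by have := kept_stq (gen_conf_flagged p_new) p_new; rewrite eqxx.
Qed.

Lemma swap_conf_bare p a : swap_conf p set0 a = bare (sw a p).
Proof. by rewrite /swap_conf imset0 hits_f0. Qed.

Lemma bare_in_bwd w p j : bare p \in bwd (w ++ [:: j]) <-> j <= swaps w p.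
Proof.
elim: w p => [|a w IH] p /=.
  rewrite /swaps big_nil perm1; split.
    case/mem_bwd_cons=> y /mem_bwd0 y_f /atrans_T' [_ _ [v /det_step_stqP]].
    by case=> [y_swap|[]//]; move: y_f; rewrite y_swap => /eqP; rewrite stq_neq_f.
  move=> jp; have [gen_p _ _] := kept_bare p; have j_new := negbT (hits_f0 j).
  have step := det_step_final false jp j_new.
  apply/mem_bwd_cons; exists (final_conf p set0 j); first exact: final_in_bwd0 gen_p jp j_new.
  apply/atrans_T'; split; [exact: kept_bare | | by exists (2 * n - p)].
  exact: kept_final (det_genS gen_p step).
rewrite swaps_cons permM -IH; split.
  case/mem_bwd_cons=> y y_bwd /atrans_T' [_ _ [v /det_step_stqP]].
  case=> [y_swap|[_ _ y_final]]; first by rewrite -swap_conf_bare -y_swap.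
  have y_nf : y.1 != st_f n by apply: bwd_nonfinal y_bwd _; case: (w).
  by rewrite y_final eqxx in y_nf.
move=> y_bwd; apply/mem_bwd_cons; exists (bare (sw a p)) => //.
apply/atrans_T'; split; [exact: kept_bare | exact: kept_bare | exists (swap_out p a)].
by rewrite -swap_conf_bare; apply: det_step_swap; rewrite inE.
Qed.

Lemma conf_in_bwd w p N b j : G (stq p, qset N b) -> p \notin N ->
  j <= swaps w p -> {in N, forall k, swaps w k < j} -> (stq p, qset N b) \in bwd (w ++ [:: j]).
Proof.
elim: w p N b => [|a w IH] p N b gen_x pN /=.
  rewrite /swaps big_nil perm1 => jp N_lt.
  have Nj : ~~ hits_f N j.
    by apply/existsP => -[k /andP [kN jk]]; have := N_lt k kN; rewrite perm1 ltnNge jk.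
  have step := det_step_final b jp Nj.
  apply/mem_bwd_cons; exists (final_conf p N j); first exact: final_in_bwd0 gen_x jp Nj.
  apply/atrans_T'; split; [exact: kept_stq | | by exists (2 * n - p)].
  exact: kept_final (det_genS gen_x step).
rewrite swaps_cons permM => jp N_lt.
have step := det_step_swap b a pN.
have swpN : sw a p \notin sw a @: N by rewrite mem_imset_sw.
apply/mem_bwd_cons; exists (swap_conf p N a).
  apply: IH (det_genS gen_x step) swpN jp _ => _ /imsetP [k kN ->].
  by have := N_lt k kN; rewrite permM.
apply/atrans_T'; split; [exact: kept_stq | | by exists (swap_out p a)].
exact: kept_stq (det_genS gen_x step) swpN.
Qed.

Lemma s_notin_bwd1 j : (st_s n, set0) \notin bwd [:: j].
Proof.
apply/negP => /mem_bwd_cons [y /mem_bwd0 y_f /atrans_T' [_ _ [v /det_step_initP [k y_k]]]].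
by move: y_f; rewrite y_k => /eqP; rewrite stq_neq_f.
Qed.

Definition top A : {set 'I_n} := [set i : 'I_n | n - #|A| <= i].

Lemma card_top A : #|A| = #|top A|.
Proof.
have -> : top A = ~: [set i : 'I_n | i < n - #|A|] by apply/setP => i; rewrite !inE leqNgt.
have := max_card (mem A); rewrite card_ord => A_le.
by rewrite [#|~: _|]cardsCs setCK card_ord card_ltn_ord ?leq_subr // subKn.
Qed.

Lemma exists_top_perm A : exists r, r @: A == top A.
Proof. by have [r <-] := exists_perm_imset (card_top A); exists r. Qed.

Definition top_perm A : {perm 'I_n} := xchoose (exists_top_perm A).

Lemma top_permE A : top_perm A @: A = top A.
Proof. exact/eqP/(xchooseP (exists_top_perm A)). Qed.

Definition top_letter A : 'I_n := inord (n - #|A|).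

(* From [<s, {}>] the first letter is irrelevant; [top_perm A] then moves [A] to the top
   and the last letter [a_(n - #|A| + 1)] separates the top from the rest. *)
Definition select_word A := ord0 :: word_of (top_perm A) ++ [:: top_letter A].

Lemma mem_top A i : A != set0 -> (i \in top A) = (top_letter A <= i).
Proof. by move=> A_ne; rewrite inE /top_letter inordK //; move: A_ne; rewrite -card_gt0; lia. Qed.

Lemma bare_in_select A p : A != set0 -> (bare p \in bwd (select_word A)) = (p \in A).
Proof.
move=> A_ne; rewrite -(mem_imset _ _ (@perm_inj _ (top_perm A))) top_permE mem_top //.
have swaps_top : swaps (ord0 :: word_of (top_perm A)) = top_perm A.
  by rewrite swaps_cons sw0 mul1g swaps_word_of.
rewrite /select_word -cat_cons; apply/idP/idP => [/bare_in_bwd|top_p]; first by rewrite swaps_top.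
by apply/bare_in_bwd; rewrite swaps_top.
Qed.

Lemma s_in_select A : A != set0 -> (st_s n, set0) \in bwd (select_word A).
Proof.
move=> A_ne; have [i0 i0A] := set0Pn _ A_ne.
have [k kA k_min] := @arg_minnP _ i0 (mem A) (@nat_of_ord n) i0A.
have {}kA : k \in A := kA.
have top_r i : (i \in A) = (top_letter A <= swaps (word_of (top_perm A)) i).
  by rewrite swaps_word_of -mem_top // -top_permE mem_imset //; exact: perm_inj.
apply/mem_bwd_cons; exists (stq k, qset (below k) false).
  apply: conf_in_bwd; [exact: gen_below | exact: below_notin | |].
    by rewrite -top_r.
  move=> i; rewrite inE => ik; rewrite ltnNge -top_r.
  by apply: contraL ik => iA; rewrite -leqNgt; apply: k_min.
apply/atrans_T'; split; [exact: kept_s | exact: kept_below | exists k; exact: det_step_init].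
Qed.

Lemma card_subsets_rev_T' : exists S : {set {set X}},
  2 ^ n + n <= #|S| /\ forall P, P \in S -> subset_reach RU P.
Proof.
pose nonempty := powerset [set: 'I_n] :\ set0.
have mem_nonempty A : (A \in nonempty) = (A != set0).
  by rewrite in_setD1 powersetE subsetT andbT.
pose S1 := [set bwd [:: j] | j : 'I_n].
pose S2 := [set bwd (select_word A) | A in nonempty].
exists (bwd [::] |: (S1 :|: S2)); split; last first.
  by move=> P; rewrite !inE => /orP [/eqP ->|/orP [] /imsetP [? _ ->]]; apply: subset_reach_run.
have bare_in_bwd1 j p : (bare p \in bwd [:: j]) = (j <= p).
  by apply/idP/idP => [/(bare_in_bwd [::])|jp]; [|apply/(bare_in_bwd [::])];
    rewrite /swaps big_nil perm1.
have card_S1 : #|S1| = n.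
  rewrite card_imset ?card_ord // => j j' eq_bwd; apply/val_inj/eqP.
  have jj' : j <= j' by rewrite -bare_in_bwd1 eq_bwd bare_in_bwd1.
  have j'j : j' <= j by rewrite -bare_in_bwd1 -eq_bwd bare_in_bwd1.
  by rewrite eqn_leq jj' j'j.
have card_S2 : #|S2| = 2 ^ n - 1.
  rewrite card_in_imset; last first.
    move=> A A'; rewrite !mem_nonempty => A_ne A'_ne eq_bwd; apply/setP => p.
    by rewrite -(bare_in_select p A_ne) eq_bwd bare_in_select.
  have := cardsD1 set0 (powerset [set: 'I_n]).
  by rewrite card_powerset cardsT card_ord powersetE sub0set => ->; rewrite addKn.
have f_in_bwd0 : final_conf ord0 set0 ord0 \in bwd [::].
  by have [gen0 _ _] := kept_bare ord0; apply: final_in_bwd0 gen0 (leqnn _) (negbT (hits_f0 _)).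
have bwd0_new : bwd [::] \notin S1 :|: S2.
  apply/negP => /setUP [] /imsetP [? _ eq_bwd]; move: f_in_bwd0; rewrite eq_bwd;
    by move/bwd_nonfinal => /(_ isT); rewrite eqxx.
rewrite cardsU1 bwd0_new card_disjoint_setU; last first.
  move=> _ /imsetP [j _ ->]; apply/imsetP => -[A A_ne eq_bwd].
  by move: (s_notin_bwd1 j); rewrite eq_bwd s_in_select -?mem_nonempty.
rewrite card_S1 card_S2; have := expn_gt0 2 n; lia.
Qed.

End Proposition9.

Theorem proposition9 (n : nat) (hn : 0 < n) :
  [/\ (* (1) T'_n has at least (2n+3) 2^(n-2) states *)
      (exists S : {set Tstate n * {set Tstate n}},
         (2 * n + 3) * 2 ^ n <= 4 * #|S| /\ forall x, x \in S -> tstate (T'_ n) x),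
      (* (2) subset construction of the underlying automaton: >= n! + 2 states *)
      (exists S : {set {set Tstate n * {set Tstate n}}},
         n`! + 2 <= #|S| /\ forall P, P \in S -> subset_reach (underlying (T'_ n)) P)
    & (* (3) subset construction of the reversed underlying automaton: >= 2^n + n states *)
      (exists S : {set {set Tstate n * {set Tstate n}}},
         2 ^ n + n <= #|S| /\
         forall P, P \in S -> subset_reach (reversal (underlying (T'_ n))) P)].
Proof.
case: n hn => [//|m] _.
by split; [exact: card_states_T' | exact: card_subsets_T' | exact: card_subsets_rev_T'].
Qed.
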